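(* For every integer $M\ge3$, the $M\times M$ circulant matrix $\mathbf C$ with first row $(1,-1,0,\dots,0,1)$ (i.e. $(\mathbf C\mathbf x)_p=x_p+x_{p-1}-x_{p+1}$ with indices modulo $M$) is invertible. Hence for every $\boldsymbol\psi\in\mathbb R^M$ the system $\mathbf C\mathbf x=\boldsymbol\psi$ has the unique solution $\mathbf x=\mathbf C^{-1}\boldsymbol\psi$; in particular, the Tensor Ring ranks, which satisfy $\mathbf C(\log r_1,\dots,\log r_M)^\top=\boldsymbol\psi$ with $\psi_p=\log\xi_p$, are uniquely determined by $\boldsymbol\psi$ via $r_p=\exp(x_p)$.
   Context: In the Tensor Ring model of order $M$ with ranks $(r_1,\dots,r_M)$, $\xi_p:=(\mathbb E[Y])^2v_{\{p,p+1\}}/(v_{\{p\}}v_{\{p+1\}})$ is a quantity computed from the mean $\mathbb E[Y]$ and pure interaction terms $v_S$ (inclusion–exclusion combinations of exact-sharing covariances of the observed tensor entries), and the paper shows that $x_p=\log r_p$ satisfies $x_p+x_{p-1}-x_{p+1}=\log\xi_p$ for $p=1,\dots,M$ (indices modulo $M$). *)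

From HB Require Import structures.
From mathcomp Require Import all_boot all_order all_algebra.
From mathcomp Require Import all_classical all_reals all_analysis.
Set Implicit Arguments. Unset Strict Implicit. Unset Printing Implicit Defensive.
Import Order.TTheory GRing.Theory Num.Theory.
Local Open Scope ring_scope.

Definition circC (R : pzRingType) (M : nat) : 'M[R]_M :=
  \matrix_(p < M, q < M)
     (((q : nat) == p)%N%:R
      + ((q : nat) == (p + M - 1) %% M)%N%:R
      - ((q : nat) == (p + 1) %% M)%N%:R).

From HB Require Import structures.
From mathcomp Require Import all_boot all_order all_algebra.
From mathcomp Require Import all_classical all_reals all_analysis.
From mathcomp Require Import zify.
Set Implicit Arguments. Unset Strict Implicit. Unset Printing Implicit Defensive.
Import Order.TTheory GRing.Theory Num.Theory.
Local Open Scope ring_scope.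

(* The +1 just below the diagonal of C cancels against the -1 just above the
   diagonal of C^T, so C + C^T = 2 I for every M.  Hence x C x^T = |x|^2 for a row vector x, so x C = 0 forces x = 0
   and C is invertible; the ranks are then recovered as exp of the unique
   solution because exp inverts ln on positive reals. *)

Lemma eq_mod_pred_succ (M p q : nat) : (p < M)%N -> (q < M)%N ->
  (q == (p + M - 1) %% M)%N = (p == (q + 1) %% M)%N.
Proof.
move=> ltpM ltqM; rewrite -[q in LHS](modn_small ltqM) -[p in RHS](modn_small ltpM).
rewrite -(eqn_modDr 1) subnK ?modnDr 1?eq_sym //; lia.
Qed.

Lemma circC_add_tr (R : pzRingType) (M : nat) : circC R M + (circC R M)^T = 2%:M.
Proof.
apply/matrixP => i j; rewrite !mxE.
rewrite (eq_mod_pred_succ (ltn_ord j) (ltn_ord i)).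
rewrite (eq_mod_pred_succ (ltn_ord i) (ltn_ord j)) [(j : nat) == i]eq_sym.
set a := ((i : nat) == j)%N%:R; set b := ((i : nat) == _)%N%:R.
set c := ((j : nat) == _)%N%:R.
rewrite addrACA -opprD addrACA [b + c]addrC addrK -mulr2n.
by rewrite /a -[(i : nat) == j]/(i == j); case: (i == j); rewrite ?mul0rn.
Qed.

Lemma quadratic_form_tr (R : comPzRingType) (n : nat) (A : 'M[R]_n) (v : 'rV[R]_n) :
  v *m A^T *m v^T = v *m A *m v^T.
Proof.
by rewrite [RHS]mx11_scalar -tr_scalar_mx -mx11_scalar !trmx_mul trmxK mulmxA.
Qed.

Lemma mulmx_tr_row_eq0 (R : realDomainType) (n : nat) (v : 'rV[R]_n) :
  (v *m v^T == 0) = (v == 0).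
Proof.
apply/eqP/eqP => [/matrixP/(_ 0 0)|->]; last by rewrite mul0mx.
rewrite !mxE => vv0; apply/rowP => j; rewrite mxE.
have sq0 : \sum_(k < n) v 0 k ^+ 2 = 0.
  by rewrite -[RHS]vv0; apply: eq_bigr => k _; rewrite mxE expr2.
by apply/eqP; rewrite -sqrf_eq0 (psumr_eq0P (fun k _ => sqr_ge0 (v 0 k)) sq0).
Qed.

Lemma unitmx_add_tr_scalar (R : realFieldType) (n : nat) (A : 'M[R]_n) (c : R) :
  c != 0 -> A + A^T = c%:M -> A \in unitmx.
Proof.
move=> c_neq0 symA; rewrite unitmxE unitfE; apply/negP => /det0P[v v_neq0 vA0].
have vAv0 : v *m A *m v^T = 0 by rewrite vA0 mul0mx.
have : v *m (A + A^T) *m v^T = 0.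
  by rewrite mulmxDr mulmxDl quadratic_form_tr vAv0 addr0.
rewrite symA mul_mx_scalar -scalemxAl => /eqP.
by rewrite scaler_eq0 (negPf c_neq0) mulmx_tr_row_eq0 (negPf v_neq0).
Qed.

Lemma circC_unit (R : realFieldType) (M : nat) : circC R M \in unitmx.
Proof. by apply: unitmx_add_tr_scalar (circC_add_tr R M); rewrite pnatr_eq0. Qed.

Lemma mulmx_eq_invmx (R : comUnitRingType) (n : nat) (A : 'M[R]_n) (x b : 'cV[R]_n) :
  A \in unitmx -> A *m x = b <-> x = invmx A *m b.
Proof. by move=> unitA; split=> [<-|->]; rewrite ?mulKmx ?mulKVmx. Qed.

Lemma map_mx_lnK (R : realType) (m n : nat) (r : 'M[R]_(m, n)) :
  (forall i j, 0 < r i j) -> map_mx (@expR R) (map_mx (@ln R) r) = r.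
Proof. by move=> r_gt0; apply/matrixP => i j; rewrite !mxE lnK // posrE. Qed.

Theorem mainTheorem12 (R : realType) (M : nat) (hM : (3 <= M)%N) :
  circC R M \in unitmx /\
  (forall psi : 'cV[R]_M,
     (forall x : 'cV[R]_M, circC R M *m x = psi <-> x = invmx (circC R M) *m psi) /\
     (forall r : 'cV[R]_M, (forall p, 0 < r p 0) ->
        circC R M *m map_mx (@ln R) r = psi ->
        r = map_mx (@expR R) (invmx (circC R M) *m psi))).
Proof.
have unitC := circC_unit R M.
split=> // psi; split=> [x|r r_gt0 /(mulmx_eq_invmx _ _ unitC) <-].
  exact: mulmx_eq_invmx.
by rewrite map_mx_lnK // => i j; rewrite (ord1 j).
Qed.
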